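(* Let $n\ge 2$ be an integer, $C\ge 4$ a constant, $Z$ a finite set with $|Z|\ge 2$, and $T_1,T_2$ rooted $Z$-trees with $\mathrm{Seq}(T_1)=\mathrm{Seq}(T_2)$. Then at least one of the following holds: (1) there is a pair $(x,Y)$ with $x\in Z$, $\emptyset\neq Y\subset Z$, $\mathrm{lca}_{T_1}(Y)\prec\mathrm{lca}_{T_1}(Y\cup\{x\})$, $\mathrm{lca}_{T_2}(Y)\prec\mathrm{lca}_{T_2}(Y\cup\{x\})$ and $|Y|\ge |Z|/C$; (2) there is a good pair $(x,Y)$ (with respect to $n$, $T_1$, $T_2$); (3) there is a set $A\subseteq Z$ with $|A|\ge \log n$ such that the unrooted trees obtained from $T_1|A$ and $T_2|A$ by suppressing the root are identical caterpillars.
   Context: A rooted $Z$-tree is a binary rooted tree with a root of degree two, all other internal nodes of degree three, leaves bijectively labeled by $Z$, and each internal node having a designated left child and right child. $x\preceq y$ means $x$ is a descendant of $y$ ($x\prec y$ if also $x\ne y$); $\mathrm{lca}_T(W)$ is the lowest node having all elements of $W$ as descendants. For $A\subseteq Z$, $T|A$ is the rooted tree obtained from the minimal subtree spanning $A$, rooted at $\mathrm{lca}_T(A)$, by suppressing non-root degree-two nodes. $\mathrm{Seq}(T)$ is the left-to-right leaf ordering given by pre-order traversal (left child before right child). A good pair (with respect to $n$, $T_1$, $T_2$) is a pair $(x,Y)$ with $x\in Z$, $\emptyset\ne Y\subset Z$, $\mathrm{lca}_{T_1}(Y)\prec\mathrm{lca}_{T_1}(Y\cup\{x\})$, $\mathrm{lca}_{T_2}(Y)\prec\mathrm{lca}_{T_2}(Y\cup\{x\})$,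 and $|Y|\ge|Z|/(2\log n)$. A tree is a caterpillar if every internal node is adjacent to at least one leaf; unrooted trees are identical if there is a label-preserving graph isomorphism. $\log=\log_2$. *)

From Stdlib Require Import Reals.
From mathcomp Require Import all_boot.

Set Implicit Arguments.
Unset Strict Implicit.
Unset Printing Implicit Defensive.

Inductive btree (Z : Type) : Type :=
| Leaf : Z -> btree Z
| Node : btree Z -> btree Z -> btree Z.
Arguments Leaf {Z}.
Arguments Node {Z}.

Section Trees.
Variable Z : finType.

(* Seq(T): leaf labels in pre-order, left child before right child. *)
Fixpoint leaves (t : btree Z) : seq Z :=
  match t with Leaf a => [:: a] | Node l r => leaves l ++ leaves r end.

(* A rooted Z-tree: leaves bijectively labelled by Z. (The root of a [Node]
   has degree two, every other internal node degree three.) *)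
Definition ZTree (t : btree Z) : Prop := perm_eq (leaves t) (enum Z).

Definition leafset (t : btree Z) : {set Z} := [set x in leaves t].

(* Nodes are addressed by paths from the root (false = left, true = right). *)
Fixpoint sub_at (t : btree Z) (p : seq bool) : option (btree Z) :=
  match p with
  | [::] => Some t
  | b :: p' => match t with
               | Leaf _ => None
               | Node l r => sub_at (if b then r else l) p'
               end
  end.

Definition is_node (t : btree Z) (p : seq bool) : bool := isSome (sub_at t p).

Definition leaf_label (t : btree Z) (p : seq bool) : option Z :=
  match sub_at t p with Some (Leaf a) => Some a | _ => None end.

(* u is a strict descendant of v (u ≺ v). *)
Definition prec (u v : seq bool) : bool := prefix v u && (u != v).

(* lca_T(W): the lowest node having all of W as descendants (W nonempty). *)
Fixpoint lca (t : btree Z) (W : {set Z}) : seq bool :=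
  match t with
  | Leaf _ => [::]
  | Node l r =>
      if W \subset leafset l then false :: lca l W
      else if W \subset leafset r then true :: lca r W
      else [::]
  end.

(* T|A: minimal subtree spanning A, rooted at lca(A), degree-two nodes suppressed. *)
Fixpoint restrict (A : {set Z}) (t : btree Z) : option (btree Z) :=
  match t with
  | Leaf a => if a \in A then Some (Leaf a) else None
  | Node l r =>
      match restrict A l, restrict A r with
      | Some l', Some r' => Some (Node l' r')
      | Some l', None => Some l'
      | None, Some r' => Some r'
      | None, None => None
      end
  end.

(* Unrooted tree obtained by suppressing the root: vertices are the non-root
   nodes (or the single leaf if the tree is a leaf); edges are parent-child
   edges not incident to the root, plus an edge joining the two root children. *)
Definition uvert (t : btree Z) (p : seq bool) : bool :=
  is_node t p && (if t is Node _ _ then p != [::] else true).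

Definition parent (u v : seq bool) : bool :=
  prefix u v && (size v == (size u).+1).

Definition uadj (t : btree Z) (u v : seq bool) : bool :=
  [&& uvert t u, uvert t v &
      [|| parent u v, parent v u,
          (u == [:: false]) && (v == [:: true]) |
          (u == [:: true]) && (v == [:: false])]].

(* Identical unrooted trees: label-preserving graph isomorphism. *)
Definition identical (t1 t2 : btree Z) : Prop :=
  exists f : seq bool -> seq bool,
    [/\ (forall u, uvert t1 u -> uvert t2 (f u)),
        {in uvert t1 &, injective f},
        (forall v, uvert t2 v -> exists2 u, uvert t1 u & f u = v),
        (forall u v, uvert t1 u -> uvert t1 v -> uadj t2 (f u) (f v) = uadj t1 u v) &
        (forall u, uvert t1 u -> leaf_label t2 (f u) = leaf_label t1 u)].

(* Caterpillar: every internal (unlabelled) vertex is adjacent to a leaf. *)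
Definition caterpillar (t : btree Z) : Prop :=
  forall v, uvert t v -> leaf_label t v = None ->
    exists u, uadj t v u && (leaf_label t u != None).

(* The pair condition shared by (1) and good pairs (without size bound). *)
Definition pair_cond (t1 t2 : btree Z) (x : Z) (Y : {set Z}) : bool :=
  [&& Y != set0, Y \proper [set: Z],
      prec (lca t1 Y) (lca t1 (x |: Y)) &
      prec (lca t2 Y) (lca t2 (x |: Y))].

End Trees.

Local Open Scope R_scope.
Definition log2 (x : R) : R := ln x / ln 2.

Definition good_pair (Z : finType) (n : nat) (t1 t2 : btree Z) (x : Z) (Y : {set Z}) : Prop :=
  pair_cond t1 t2 x Y /\
  Rge (INR #|Y|) (INR #|Z| / (2 * log2 (INR n))).

From Stdlib Require Import Reals Lra.
From mathcomp Require Import all_boot zify.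

(* Both trees induce the same leaf sequence s.  Fix a threshold k and suppose no
   pair (x, Y) satisfying the lca conditions in both trees has |Y| >= k.  Let the
   root of T1 split s after its first q leaves and that of T2 after its first
   p >= q leaves.  A subtree of T1 whose leaves all lie before position p forms
   such a pair with the leaf at position p, which sits on the other side of the
   root of T2; hence it has fewer than k leaves.  Symmetrically for subtrees of T2
   lying after position q - 1.  Sample every (k-1)-th leaf of s between positions
   q - 1 and p: a node of T1 with two sampled leaves on its left and one on its
   right would have a left subtree with at least k leaves lying before p, so T1
   restricted to the sample is a right comb; likewise T2 restricted to it is a
   left comb on the same sequence.  Both are caterpillars, and suppressing the
   root turns a left and a right comb on the same sequence into the same tree.
   The sample has about |Z|/k leaves, and k = min(|Z|/C, |Z|/(2 log n)) yields
   either alternative (1)/(2) or a sample of size at least log n. *)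

Set Implicit Arguments.
Unset Strict Implicit.
Unset Printing Implicit Defensive.

Section Subtrees.
Variable Z : finType.
Implicit Types (t u l r : btree Z) (W : {set Z}) (p : seq bool).

Lemma leaves_sub_at t p u : sub_at t p = Some u ->
  exists pre suf, leaves t = pre ++ leaves u ++ suf.
Proof.
elim: t p => [a|l IHl r IHr] [|[] p] //=.
- by case=> <-; exists [::], [::].
- by case=> <-; exists [::], [::]; rewrite cats0.
- by case/IHr => pre [suf ->]; exists (leaves l ++ pre), suf; rewrite catA.
- by case/IHl => pre [suf ->]; exists pre, (suf ++ leaves r); rewrite !catA.
Qed.

Lemma sub_at_rcons t p b l r : sub_at t p = Some (Node l r) ->
  sub_at t (rcons p b) = Some (if b then r else l).
Proof.
elim: p t => [|c p IH] [a|tl tr] //=; last exact: IH.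
by case=> -> ->; case: b; [case: r | case: l].
Qed.

Lemma sub_at_leaves t p u : sub_at t p = Some u -> {subset leaves u <= leaves t}.
Proof. by case/leaves_sub_at=> pre [suf ->] z Hz; rewrite !mem_cat Hz orbT. Qed.

Lemma uniq_sub_at t p u : uniq (leaves t) -> sub_at t p = Some u -> uniq (leaves u).
Proof.
move=> Hu /leaves_sub_at [pre [suf E]]; move: Hu.
by rewrite E !cat_uniq => /and3P [_ _ /andP []].
Qed.

Lemma leaves_neq0 t : leaves t != [::].
Proof. by elim: t => //= l + r _; case: (leaves l). Qed.

Lemma leafset_neq0 t : leafset t != set0.
Proof.
apply/set0Pn; case E: (leaves t) (leaves_neq0 t) => [|a s] // _.
by exists a; rewrite inE E mem_head.
Qed.

Lemma card_leafset t : uniq (leaves t) -> #|leafset t| = size (leaves t).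
Proof. by move=> Hu; rewrite cardsE; apply/card_uniqP. Qed.

Lemma sub_at_leaf t z : z \in leaves t -> exists p, sub_at t p = Some (Leaf z).
Proof.
elim: t => [a|l IHl r IHr] /=; first by rewrite inE => /eqP ->; exists [::].
by rewrite mem_cat => /orP [/IHl [p Hp] | /IHr [p Hp]];
  [exists (false :: p) | exists (true :: p)].
Qed.

Lemma leaves_disjoint l r z : uniq (leaves (Node l r)) ->
  z \in leaves l -> z \notin leaves r.
Proof.
by rewrite /= cat_uniq => /and3P [_ /hasPn Hd _] Hl; apply/negP => /Hd; rewrite Hl.
Qed.

Lemma leaves_disjointC l r z : uniq (leaves (Node l r)) ->
  z \in leaves r -> z \notin leaves l.
Proof. by move=> Hu; apply: contraL; apply: leaves_disjoint. Qed.

Lemma subset_leafsetF t W z : z \in W -> z \notin leaves t ->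
  (W \subset leafset t) = false.
Proof. by move=> Hz Hzt; apply/negP => /subsetP /(_ z Hz); rewrite inE (negbTE Hzt). Qed.

Lemma subset_leafset_right l r W : uniq (leaves (Node l r)) -> W != set0 ->
  W \subset leafset r -> (W \subset leafset l) = false.
Proof.
move=> Hu /set0Pn [y Hy] /subsetP /(_ y Hy); rewrite inE => Hyr.
exact: subset_leafsetF Hy (leaves_disjointC Hu Hyr).
Qed.

Lemma lca_sub_at t W : W \subset leafset t ->
  exists2 u, sub_at t (lca t W) = Some u & W \subset leafset u.
Proof.
elim: t => [a|l IHl r IHr] /=; first by exists (Leaf a).
case: ifP => [/IHl [u] | _]; first by exists u.
case: ifP => [/IHr [u] | _ HW]; first by exists u.
by exists (Node l r).
Qed.

Lemma prefix_lca t W1 W2 : uniq (leaves t) -> W1 != set0 -> W1 \subset W2 ->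
  prefix (lca t W2) (lca t W1).
Proof.
elim: t => [a|l IHl r IHr] //= Hu W10 W12.
have [Hul Hur] : uniq (leaves l) /\ uniq (leaves r).
  by move: Hu; rewrite cat_uniq => /and3P [-> _ ->].
case: ifP => [W2l | _]; first by rewrite (subset_trans W12 W2l) /= IHl.
case: ifP => [W2r | _]; last exact: prefix0s.
have W1r := subset_trans W12 W2r.
by rewrite (subset_leafset_right Hu W10 W1r) W1r /= IHr.
Qed.

Lemma lca_leafset t p u : uniq (leaves t) -> sub_at t p = Some u ->
  lca t (leafset u) = p.
Proof.
elim: t p => [a|l IHl r IHr] [|[] p] //= Hu.
- case=> <-; have [y] := set0Pn _ (leafset_neq0 r); have [z] := set0Pn _ (leafset_neq0 l).
  rewrite !inE => Hzl Hyr.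
  have Hy : y \in leafset (Node l r) by rewrite inE mem_cat Hyr orbT.
  have Hz : z \in leafset (Node l r) by rewrite inE mem_cat Hzl.
  by rewrite (subset_leafsetF Hy (leaves_disjointC Hu Hyr))
    (subset_leafsetF Hz (leaves_disjoint Hu Hzl)).
- move=> Hs; have Hur : uniq (leaves r) by move: Hu; rewrite cat_uniq => /and3P [].
  have Hsub : leafset u \subset leafset r.
    by apply/subsetP => z; rewrite !inE => /(sub_at_leaves Hs).
  by rewrite (subset_leafset_right Hu (leafset_neq0 u) Hsub) Hsub (IHr p).
- move=> Hs; have Hul : uniq (leaves l) by move: Hu; rewrite cat_uniq => /and3P [].
  have Hsub : leafset u \subset leafset l.
    by apply/subsetP => z; rewrite !inE => /(sub_at_leaves Hs).
  by rewrite Hsub (IHl p).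
Qed.

Lemma prec_lca_sub_at t p u x : uniq (leaves t) -> sub_at t p = Some u ->
  x \in leaves t -> x \notin leaves u ->
  prec (lca t (leafset u)) (lca t (x |: leafset u)).
Proof.
move=> Hu Hs Hx Hxu; rewrite (lca_leafset Hu Hs) /prec.
rewrite -{1}(lca_leafset Hu Hs) prefix_lca ?leafset_neq0 ?subsetUr //=.
apply/eqP => Ep; have [|v] := @lca_sub_at t (x |: leafset u).
  rewrite subUset sub1set inE Hx /=.
  by apply/subsetP => z; rewrite !inE => /(sub_at_leaves Hs).
rewrite -Ep Hs => -[<-] /subsetP /(_ x); rewrite !inE eqxx => /(_ isT).
by rewrite (negbTE Hxu).
Qed.

Lemma prec_lca_Node l r W x : uniq (leaves (Node l r)) -> W != set0 ->
  (W \subset leafset l) && (x \in leaves r) || (W \subset leafset r) && (x \in leaves l) ->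
  prec (lca (Node l r) W) (lca (Node l r) (x |: W)).
Proof.
move=> Hu W0 HW; have [y Hy] := set0Pn _ W0.
have Hyx : y \in x |: W by rewrite !inE Hy orbT.
have Hxx : x \in x |: W by rewrite !inE eqxx.
rewrite /= /prec; case/orP: HW => /andP [HWs Hx].
- have Hyl : y \in leaves l by move/subsetP: HWs => /(_ y Hy); rewrite inE.
  by rewrite HWs (subset_leafsetF Hxx (leaves_disjointC Hu Hx))
    (subset_leafsetF Hyx (leaves_disjoint Hu Hyl)).
- have Hyr : y \in leaves r by move/subsetP: HWs => /(_ y Hy); rewrite inE.
  rewrite (subset_leafsetF Hyx (leaves_disjointC Hu Hyr))
    (subset_leafsetF Hxx (leaves_disjoint Hu Hx)).
  by case: ifP; rewrite ?HWs.
Qed.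

Lemma pair_cond_leafset t1 t2 x u : x \notin leaves u ->
  pair_cond t1 t2 x (leafset u) =
  prec (lca t1 (leafset u)) (lca t1 (x |: leafset u)) &&
  prec (lca t2 (leafset u)) (lca t2 (x |: leafset u)).
Proof.
move=> Hx; have Hprop : leafset u \proper [set: Z].
  by rewrite properT; apply: contraNneq Hx => E; rewrite -[x \in _]in_set -/(leafset u) E inE.
by rewrite /pair_cond leafset_neq0 Hprop.
Qed.

End Subtrees.

Section Unrooted.
Variable Z : finType.
Implicit Types (t X Y W : btree Z) (u v : seq bool).

Definition addr_adj u v : bool :=
  [|| parent u v, parent v u,
      (u == [:: false]) && (v == [:: true]) |
      (u == [:: true]) && (v == [:: false])].

Lemma uadjE t u v : uadj t u v = [&& uvert t u, uvert t v & addr_adj u v].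
Proof. by []. Qed.

Lemma identical_bij t1 t2 (f g : seq bool -> seq bool) :
  (forall u, uvert t1 u -> uvert t2 (f u)) ->
  (forall v, uvert t2 v -> uvert t1 (g v)) ->
  (forall u, uvert t1 u -> g (f u) = u) ->
  (forall v, uvert t2 v -> f (g v) = v) ->
  (forall u v, uvert t1 u -> uvert t1 v -> uadj t2 (f u) (f v) = uadj t1 u v) ->
  (forall u, uvert t1 u -> leaf_label t2 (f u) = leaf_label t1 u) ->
  identical t1 t2 /\ identical t2 t1.
Proof.
move=> fV gV fK gK f_adj f_lab; split.
  exists f; split => //.
  - by move=> u v Hu Hv E; rewrite -(fK u) // -(fK v) // E.
  - by move=> v Hv; exists (g v); rewrite ?gV ?gK.
exists g; split => //.
- by move=> u v Hu Hv E; rewrite -(gK u) // -(gK v) // E.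
- by move=> u Hu; exists (f u); rewrite ?fV ?fK.
- by move=> u v Hu Hv; rewrite -f_adj ?gV ?gK.
- by move=> v Hv; rewrite -{2}(gK v) // f_lab ?gV.
Qed.

Lemma identical_trans t1 t2 t3 :
  identical t1 t2 -> identical t2 t3 -> identical t1 t3.
Proof.
case=> f [fV f_inj f_surj f_adj f_lab] [g [gV g_inj g_surj g_adj g_lab]].
exists (g \o f); split => /=.
- by move=> u /fV /gV.
- by move=> u v Hu Hv /g_inj E; apply: f_inj => //; apply: E; apply: fV.
- by move=> w /g_surj [v /f_surj [u Hu <-] <-]; exists u.
- by move=> u v Hu Hv; rewrite g_adj ?f_adj ?fV.
- by move=> u Hu; rewrite g_lab ?f_lab ?fV.
Qed.

Lemma caterpillar_identical t1 t2 :
  identical t1 t2 -> caterpillar t1 -> caterpillar t2.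
Proof.
case=> f [fV _ f_surj f_adj f_lab] cat1 v Hv.
case: (f_surj v Hv) => u Hu <-; rewrite f_lab // => /(cat1 u Hu) [w].
case/andP=> Huw Hlab; have /and3P [_ Hw _] := Huw.
by exists (f w); rewrite f_adj // Huw f_lab.
Qed.

(* Reassociation ((X,Y),W) -> (X,(Y,W)): after the root is suppressed both
   trees are the same star of X, Y, W around one internal vertex. *)
Definition rotate_addr u : seq bool :=
  match u with
  | [:: false] => [:: true]
  | false :: false :: p => false :: p
  | false :: true :: p => true :: false :: p
  | true :: p => true :: true :: p
  | [::] => [::]
  end.

Definition unrotate_addr u : seq bool :=
  match u with
  | [:: true] => [:: false]
  | false :: p => false :: false :: p
  | true :: false :: p => false :: true :: p
  | true :: true :: p => true :: p
  | [::] => [::]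
  end.

Lemma addr_adj_rotate u v : u != [::] -> v != [::] ->
  addr_adj (rotate_addr u) (rotate_addr v) = addr_adj u v.
Proof.
case: u => [|[] [|[] p]] // _; case: v => [|[] [|[] q]] // _;
  rewrite /addr_adj /parent /= ?eqseq_cons /= ?andbF ?orbF //;
  (try by case: p); by case: q.
Qed.

Lemma identical_rotate X Y W :
  identical (Node (Node X Y) W) (Node X (Node Y W)) /\
  identical (Node X (Node Y W)) (Node (Node X Y) W).
Proof.
have rotV u : uvert (Node (Node X Y) W) u -> uvert (Node X (Node Y W)) (rotate_addr u).
  by case: u => [|[] [|[] p]].
apply: (identical_bij (f := rotate_addr) (g := unrotate_addr)) => //;
  try by case=> [|[] [|[] p]].
move=> u v Hu Hv; rewrite !uadjE Hu Hv !rotV // addr_adj_rotate //.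
- by case/andP: Hu.
- by case/andP: Hv.
Qed.

Fixpoint rcomb (x : Z) (xs : seq Z) : btree Z :=
  if xs is y :: ys then Node (Leaf x) (rcomb y ys) else Leaf x.

Definition lcomb (x : Z) (xs : seq Z) : btree Z :=
  foldl (fun t y => Node t (Leaf y)) (Leaf x) xs.

Definition rspine (xs : seq Z) t : btree Z := foldr (fun y t => Node (Leaf y) t) t xs.

Lemma lcomb_rcons x xs y : lcomb x (rcons xs y) = Node (lcomb x xs) (Leaf y).
Proof. exact: foldl_rcons. Qed.

Lemma rcomb_rcons x xs y : rcomb x (rcons xs y) = Node (Leaf x) (rspine xs (Leaf y)).
Proof. by elim: xs x => //= z zs IH x; rewrite IH. Qed.

Lemma identical_spine x xs W :
  identical (Node (lcomb x xs) W) (Node (Leaf x) (rspine xs W)) /\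
  identical (Node (Leaf x) (rspine xs W)) (Node (lcomb x xs) W).
Proof.
elim/last_ind: xs W => [|xs y IH] W; first by apply: (identical_bij (f := id) (g := id)).
have [rot unrot] := identical_rotate (lcomb x xs) (Leaf y) W.
have [IH1 IH2] := IH (Node (Leaf y) W).
rewrite lcomb_rcons /rspine foldr_rcons.
by split; [apply: identical_trans rot IH1 | apply: identical_trans IH2 unrot].
Qed.

Lemma identical_lcomb_rcomb x xs :
  identical (lcomb x xs) (rcomb x xs) /\ identical (rcomb x xs) (lcomb x xs).
Proof.
case/lastP: xs => [|xs y]; first by apply: (identical_bij (f := id) (g := id)).
by rewrite lcomb_rcons rcomb_rcons; apply: identical_spine.
Qed.

Lemma rcomb_left_leaf x xs p l r :
  sub_at (rcomb x xs) p = Some (Node l r) -> exists a, l = Leaf a.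
Proof.
elim: xs x p => [|y ys IH] x [|[] p] //=.
- by case=> <-; exists x.
- exact: IH.
- by case: p => [[]|].
Qed.

Lemma caterpillar_rcomb x xs : caterpillar (rcomb x xs).
Proof.
move=> v /[dup] Hv /andP [Hn _]; rewrite /leaf_label.
move: Hn; rewrite /is_node; case E: sub_at => [[a|l r]|] //= _ _.
have [a El] := rcomb_left_leaf E; subst l.
have Hw := sub_at_rcons false E.
exists (rcons v false); rewrite /leaf_label Hw andbT uadjE Hv.
rewrite /uvert /is_node Hw -size_eq0 size_rcons /=.
by rewrite /addr_adj /parent prefix_rcons size_rcons eqxx andbT; case: rcomb.
Qed.

End Unrooted.

Section CombRestriction.
Variables (Z : finType) (A : {set Z}).
Implicit Types (t l r : btree Z).

Definition rcomb_shaped t : Prop := forall p l r, sub_at t p = Some (Node l r) ->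
  has (mem A) (leaves r) -> count (mem A) (leaves l) <= 1.

Definition lcomb_shaped t : Prop := forall p l r, sub_at t p = Some (Node l r) ->
  has (mem A) (leaves l) -> count (mem A) (leaves r) <= 1.

Lemma restrict_rcomb t : rcomb_shaped t ->
  restrict A t = if [seq z <- leaves t | z \in A] is x :: xs
                 then Some (rcomb x xs) else None.
Proof.
elim: t => [a|l IHl r IHr] Ht /=; first by case: (a \in A).
rewrite IHl ?IHr => [|p l' r'|p l' r']; [|exact: (Ht (true :: p))|exact: (Ht (false :: p))].
have : [seq z <- leaves r | z \in A] != [::] -> size [seq z <- leaves l | z \in A] <= 1.
  by rewrite -has_filter size_filter; apply: (Ht [::]).
rewrite filter_cat; case: [seq z <- leaves r | z \in A] => [|y ys] /=.
  by rewrite cats0; case: filter.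
by case: [seq z <- leaves l | z \in A] => [|a [|b bs]] // /(_ isT).
Qed.

Lemma restrict_lcomb t : lcomb_shaped t ->
  restrict A t = if [seq z <- leaves t | z \in A] is x :: xs
                 then Some (lcomb x xs) else None.
Proof.
elim: t => [a|l IHl r IHr] Ht /=; first by case: (a \in A).
rewrite IHl ?IHr => [|p l' r'|p l' r']; [|exact: (Ht (true :: p))|exact: (Ht (false :: p))].
have : [seq z <- leaves l | z \in A] != [::] -> size [seq z <- leaves r | z \in A] <= 1.
  by rewrite -has_filter size_filter; apply: (Ht [::]).
rewrite filter_cat; case: [seq z <- leaves l | z \in A] => [|x xs] /=; first by case: filter.
case: [seq z <- leaves r | z \in A] => [|y [|b bs]] //=; [by rewrite cats0 | | by move/(_ isT)].
by rewrite cats1 lcomb_rcons.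
Qed.

End CombRestriction.

Section Indices.
Variable T : eqType.
Implicit Types (s pre m suf : seq T).

Lemma mem_cat_index_l s1 s2 z :
  z \in s1 ++ s2 -> (z \in s1) = (index z (s1 ++ s2) < size s1).
Proof.
by rewrite index_cat mem_cat; case: ifP => [H _ | _ /= _]; rewrite ?index_mem // ltnNge leq_addr.
Qed.

Lemma mem_cat_index_r s1 s2 z : uniq (s1 ++ s2) ->
  z \in s1 ++ s2 -> (z \in s2) = (size s1 <= index z (s1 ++ s2)).
Proof.
move=> Hu Hz; rewrite leqNgt -mem_cat_index_l //.
move: Hu Hz; rewrite cat_uniq mem_cat => /and3P [_ /hasPn Hd _].
by case: (boolP (z \in s2)) => [/Hd /negbTE -> | _]; rewrite ?orbF => // ->.
Qed.

Lemma index_in_block pre m suf z : uniq (pre ++ m ++ suf) -> z \in m ->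
  size pre <= index z (pre ++ m ++ suf) < size pre + size m.
Proof.
move=> Hu Hz; have Hzp : z \notin pre.
  by move: Hu; rewrite cat_uniq => /and3P [_ /hasPn /(_ z) + _]; rewrite mem_cat Hz => /(_ isT).
by rewrite index_cat (negbTE Hzp) index_cat Hz leq_addr ltn_add2l index_mem.
Qed.

Lemma index_block_gap pre m suf a c d : uniq (pre ++ m ++ suf) ->
  a \in m -> c \in m -> index a (pre ++ m ++ suf) + d <= index c (pre ++ m ++ suf) ->
  d < size m.
Proof.
move=> Hu Ha Hc; have := index_in_block Hu Ha; have := index_in_block Hu Hc; lia.
Qed.

Lemma index_block_lt pre m1 m2 suf z w : uniq (pre ++ (m1 ++ m2) ++ suf) ->
  z \in m1 -> w \in m2 ->
  index z (pre ++ (m1 ++ m2) ++ suf) < index w (pre ++ (m1 ++ m2) ++ suf).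
Proof.
move=> Hu Hz Hw.
have Hu1 : uniq (pre ++ m1 ++ (m2 ++ suf)) by rewrite -catA in Hu.
have Hu2 : uniq ((pre ++ m1) ++ m2 ++ suf) by rewrite -!catA.
have := index_in_block Hu1 Hz; have := index_in_block Hu2 Hw.
rewrite -!catA size_cat; lia.
Qed.

Lemma count_gt1_pair (P : pred T) m : uniq m -> 1 < count P m ->
  exists a c, [/\ a != c, a \in m, c \in m, P a & P c].
Proof.
move=> Hu; rewrite -size_filter; have := filter_uniq P Hu.
have Hmem x : x \in filter P m -> P x /\ x \in m by rewrite mem_filter => /andP.
case E: (filter P m) Hmem => [|a [|c rest]] //= Hmem /andP [Hac _] _.
have [Pa ma] := Hmem a (mem_head _ _).
have [Pc mc] : P c /\ c \in m by apply: Hmem; rewrite !inE eqxx orbT.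
by exists a, c; split => //; apply: contraNneq Hac => ->; rewrite mem_head.
Qed.

End Indices.

Section SpacedSample.
Variables (Z : finType) (L1 R1 L2 R2 : btree Z) (k : nat) (x0 : Z).
Local Notation T1 := (Node L1 R1).
Local Notation T2 := (Node L2 R2).
Hypothesis k_gt1 : 1 < k.
Hypothesis uniq_T1 : uniq (leaves T1).
Hypothesis same_seq : leaves T1 = leaves T2.
Hypothesis small_pairs : forall x Y, pair_cond T1 T2 x Y -> #|Y| < k.
Hypothesis L1_le_L2 : size (leaves L1) <= size (leaves L2).

Let s := leaves T1.
Let q := size (leaves L1).
Let p := size (leaves L2).

Let sE2 : s = leaves L2 ++ leaves R2. Proof. exact: same_seq. Qed.
Let uniq_T2 : uniq (leaves T2). Proof. by rewrite -same_seq. Qed.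

Let q_gt0 : 0 < q. Proof. by rewrite lt0n size_eq0 leaves_neq0. Qed.
Let p_lt_size : p < size s.
Proof. by rewrite sE2 size_cat -[p]addn0 ltn_add2l lt0n size_eq0 leaves_neq0. Qed.

Lemma small_subtree_T1 pi u : sub_at T1 pi = Some u ->
  {in leaves u, forall z, index z s < p} -> size (leaves u) < k.
Proof.
move=> Hs Hu; set x := nth x0 s p.
have xs : x \in s by rewrite mem_nth.
have ix : index x s = p by rewrite index_uniq.
have xR2 : x \in leaves R2 by rewrite (mem_cat_index_r uniq_T2) -sE2 ?ix.
have xu : x \notin leaves u by apply/negP => /Hu; rewrite ix ltnn.
rewrite -card_leafset ?(uniq_sub_at uniq_T1 Hs) //.
apply: (small_pairs (x := x) (Y := leafset u)).
rewrite pair_cond_leafset // (prec_lca_sub_at uniq_T1 Hs) //=.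
apply: prec_lca_Node uniq_T2 (leafset_neq0 u) _; rewrite xR2 andbT; apply/orP; left.
apply/subsetP => z; rewrite !inE => zu; have zs : z \in s := sub_at_leaves Hs zu.
by rewrite (mem_cat_index_l (_ : z \in leaves L2 ++ leaves R2)) -?sE2 ?Hu.
Qed.

Lemma small_subtree_T2 pi u : sub_at T2 pi = Some u ->
  {in leaves u, forall z, q <= index z s} -> size (leaves u) < k.
Proof.
move=> Hs Hu; set x := nth x0 s q.-1.
have qN : q.-1 < size s by apply: leq_ltn_trans p_lt_size; exact: leq_trans (leq_pred q) L1_le_L2.
have xs : x \in s by rewrite mem_nth.
have ix : index x s = q.-1 by rewrite index_uniq.
have xL1 : x \in leaves L1 by rewrite (mem_cat_index_l xs) ix prednK.
have xu : x \notin leaves u by apply/negP => /Hu; rewrite ix leqNgt ltn_predL q_gt0.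
rewrite -card_leafset ?(uniq_sub_at uniq_T2 Hs) //.
apply: (small_pairs (x := x)).
rewrite pair_cond_leafset // (prec_lca_sub_at uniq_T2 Hs) -?same_seq // andbT.
apply: prec_lca_Node uniq_T1 (leafset_neq0 u) _; rewrite xL1 andbT; apply/orP; right.
apply/subsetP => z; rewrite !inE => zu.
have zs : z \in s by rewrite /s same_seq (sub_at_leaves Hs zu).
by rewrite (mem_cat_index_r uniq_T1 zs) Hu.
Qed.

Let q_lt_k : q < k.
Proof.
apply: (small_subtree_T1 (pi := [:: false])) => [|z zL1]; first by case: L1.
by apply: leq_trans L1_le_L2; rewrite -mem_cat_index_l // mem_cat zL1.
Qed.

Let R2_lt_k : size (leaves R2) < k.
Proof.
apply: (small_subtree_T2 (pi := [:: true])) => [|z zR2]; first by case: R2.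
have zs : z \in leaves L2 ++ leaves R2 by rewrite mem_cat zR2 orbT.
by apply: leq_trans L1_le_L2 _; rewrite sE2 -(mem_cat_index_r uniq_T2).
Qed.

Let d := k.-1.
Let b := q.-1.
Let K := (p - b) %/ d + 1.

Definition spaced_sample : {set Z} := [set nth x0 s (b + i * d) | i : 'I_K].

Let d_gt0 : 0 < d. Proof. by rewrite /d -ltnS prednK // ltnW. Qed.

Let sample_pos_le (i : 'I_K) : b + i * d <= p.
Proof.
have Hi : i < (p - b) %/ d + 1 := ltn_ord i; rewrite addn1 ltnS in Hi.
have := leq_divM (p - b) d; have : i * d <= (p - b) %/ d * d by rewrite leq_mul2r Hi orbT.
rewrite /b; lia.
Qed.

Let index_sample (i : 'I_K) : index (nth x0 s (b + i * d)) s = b + i * d.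
Proof. by rewrite index_uniq // (leq_ltn_trans (sample_pos_le i)). Qed.

Lemma spaced_sample_index z : z \in spaced_sample -> b <= index z s <= p.
Proof. by case/imsetP => i _ ->; rewrite index_sample leq_addr sample_pos_le. Qed.

Lemma spaced_sample_gap a c : a \in spaced_sample -> c \in spaced_sample -> a != c ->
  (index a s + d <= index c s) || (index c s + d <= index a s).
Proof.
case/imsetP => i _ -> /imsetP [j _ ->]; rewrite !index_sample.
case: (ltngtP i j) => [ij|ji|/val_inj -> ]; last by rewrite eqxx.
- by rewrite -addnA leq_add2l -mulSnr leq_mul2r ij orbT.
- by rewrite orbC -addnA leq_add2l -mulSnr leq_mul2r ji orbT.
Qed.

Lemma card_spaced_sample : #|spaced_sample| = K.
Proof.
rewrite card_imset ?cardsT ?card_ord // => i j /(congr1 (index^~ s)).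
rewrite !index_sample => /eqP; rewrite eqn_add2l eqn_pmul2r // => /eqP; exact: val_inj.
Qed.

Lemma size_lt_spaced_sample : size s < (#|spaced_sample| + 2) * d.
Proof.
have := divn_eq (p - b) d; have := ltn_pmod (p - b) d_gt0.
have : size s = p + size (leaves R2) by rewrite sE2 size_cat.
rewrite card_spaced_sample /K /b /d; move: q_lt_k R2_lt_k q_gt0 L1_le_L2 => /=; rewrite -/q -/p.
nia.
Qed.

Lemma spaced_sample_block pre m suf : s = pre ++ m ++ suf ->
  1 < count (mem spaced_sample) m -> k <= size m.
Proof.
move=> Es /(count_gt1_pair _) [|a [c [ac am cm aA cA]]].
  by move: uniq_T1; rewrite -/s Es !cat_uniq => /and3P [_ _ /andP []].
have Hu : uniq (pre ++ m ++ suf) by rewrite -Es.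
rewrite -(prednK (ltnW k_gt1)) -/d.
have := spaced_sample_gap aA cA ac; rewrite Es => /orP [].
- exact: index_block_gap Hu am cm.
- exact: index_block_gap Hu cm am.
Qed.

Lemma rcomb_shaped_T1 : rcomb_shaped spaced_sample T1.
Proof.
move=> pi l r Hs /hasP [w wr wA]; rewrite leqNgt; apply/negP => Hc.
have [pre [suf Es]] := leaves_sub_at Hs.
have big : k <= size (leaves l).
  by apply: (spaced_sample_block (pre := pre) (suf := leaves r ++ suf)) Hc; rewrite /s Es /= -catA.
have : ~~ all (fun z => index z s < p) (leaves l).
  apply: contraL big => /allP Hl; rewrite -ltnNge.
  exact: small_subtree_T1 (sub_at_rcons false Hs) Hl.
case/allPn => z zl; rewrite -leqNgt => pz.
have Hu : uniq (pre ++ (leaves l ++ leaves r) ++ suf) by rewrite -Es.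
have := index_block_lt Hu zl wr; have := spaced_sample_index wA.
rewrite -Es; change (leaves (Node L1 R1)) with s; lia.
Qed.

Lemma lcomb_shaped_T2 : lcomb_shaped spaced_sample T2.
Proof.
move=> pi l r Hs /hasP [w wl wA]; rewrite leqNgt; apply/negP => Hc.
have [pre [suf Es]] := leaves_sub_at Hs; rewrite -same_seq in Es.
have big : k <= size (leaves r).
  by apply: (spaced_sample_block (pre := pre ++ leaves l) (suf := suf)) Hc; rewrite /s Es /= -!catA.
have : ~~ all (fun z => q <= index z s) (leaves r).
  apply: contraL big => /allP Hr; rewrite -ltnNge.
  exact: small_subtree_T2 (sub_at_rcons true Hs) Hr.
case/allPn => z zr; rewrite -ltnNge => zq.
have Hu : uniq (pre ++ (leaves l ++ leaves r) ++ suf) by rewrite -Es.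
have := index_block_lt Hu wl zr; have := spaced_sample_index wA.
rewrite -Es; change (leaves (Node L1 R1)) with s; rewrite /b; lia.
Qed.

Lemma spaced_sample_combs : exists (A : {set Z}) x xs,
  [/\ size (leaves T1) < (#|A| + 2) * k.-1,
      restrict A T1 = Some (rcomb x xs) & restrict A T2 = Some (lcomb x xs)].
Proof.
exists spaced_sample.
rewrite (restrict_rcomb rcomb_shaped_T1) (restrict_lcomb lcomb_shaped_T2) -same_seq.
have K_gt0 : 0 < K by rewrite /K addn1.
have : has (mem spaced_sample) s.
  apply/hasP; exists (nth x0 s (b + (Ordinal K_gt0) * d)); last exact: imset_f.
  by rewrite mem_nth // (leq_ltn_trans (sample_pos_le _)).
rewrite has_filter; case: filter => [|x xs] //= _.
by exists x, xs; split => //; apply: size_lt_spaced_sample.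
Qed.

End SpacedSample.

Section Dichotomy.
Variable Z : finType.
Implicit Types (t : btree Z).

Lemma ZTree_uniq t : ZTree t -> uniq (leaves t).
Proof. by move/perm_uniq ->; apply: enum_uniq. Qed.

Lemma ZTree_size t : ZTree t -> size (leaves t) = #|Z|.
Proof. by move/perm_size ->; rewrite cardT. Qed.

Lemma pair_condC (T1 T2 : btree Z) x Y : pair_cond T1 T2 x Y = pair_cond T2 T1 x Y.
Proof. by rewrite /pair_cond [prec _ _ && _]andbC. Qed.

Lemma pair_cond_exists (T1 T2 : btree Z) : 1 < #|Z| -> ZTree T1 -> ZTree T2 ->
  exists x Y, pair_cond T1 T2 x Y.
Proof.
move=> /card_gt1P [x [y [_ _ xy]]] zt1 zt2.
have mem_leaves t z : ZTree t -> z \in leaves t by move/perm_mem ->; rewrite mem_enum.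
have [p1 Hp1] := sub_at_leaf (mem_leaves T1 y zt1).
have [p2 Hp2] := sub_at_leaf (mem_leaves T2 y zt2).
have xy' : x \notin leaves (Leaf y) by rewrite inE.
exists x, (leafset (Leaf y)); rewrite pair_cond_leafset //.
by rewrite (prec_lca_sub_at (ZTree_uniq zt1) Hp1) ?(prec_lca_sub_at (ZTree_uniq zt2) Hp2) //;
  apply: mem_leaves.
Qed.

Lemma caterpillar_combs (x : Z) xs :
  [/\ caterpillar (rcomb x xs), caterpillar (lcomb x xs),
      identical (rcomb x xs) (lcomb x xs) & identical (lcomb x xs) (rcomb x xs)].
Proof.
have [lr rl] := identical_lcomb_rcomb x xs.
split => //.
- exact: caterpillar_rcomb.
- by apply: (caterpillar_identical rl); apply: caterpillar_rcomb.
Qed.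

Lemma common_caterpillar_Node (L1 R1 L2 R2 : btree Z) k :
  1 < k -> uniq (leaves (Node L1 R1)) -> leaves (Node L1 R1) = leaves (Node L2 R2) ->
  (forall x Y, pair_cond (Node L1 R1) (Node L2 R2) x Y -> #|Y| < k) ->
  exists (A : {set Z}) (S1 S2 : btree Z),
    size (leaves (Node L1 R1)) < (#|A| + 2) * k.-1 /\
    restrict A (Node L1 R1) = Some S1 /\ restrict A (Node L2 R2) = Some S2 /\
    caterpillar S1 /\ caterpillar S2 /\ identical S1 S2.
Proof.
move=> k_gt1 uniq1 Es small; have [x0 _] := set0Pn _ (leafset_neq0 L1).
case: (leqP (size (leaves L1)) (size (leaves L2))) => L12.
  have [A [x [xs [HA HR1 HR2]]]] := spaced_sample_combs x0 k_gt1 uniq1 Es small L12.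
  have [cr cl rl lr] := caterpillar_combs x xs.
  by exists A, (rcomb x xs), (lcomb x xs).
have uniq2 : uniq (leaves (Node L2 R2)) by rewrite -Es.
have small' x Y : pair_cond (Node L2 R2) (Node L1 R1) x Y -> #|Y| < k.
  by rewrite -pair_condC; apply: small.
have [A [x [xs [HA HR2 HR1]]]] := spaced_sample_combs x0 k_gt1 uniq2 (esym Es) small' (ltnW L12).
have [cr cl rl lr] := caterpillar_combs x xs.
by exists A, (lcomb x xs), (rcomb x xs); rewrite Es.
Qed.

Lemma large_pair_or_common_caterpillar (T1 T2 : btree Z) k :
  1 < #|Z| -> ZTree T1 -> ZTree T2 -> leaves T1 = leaves T2 ->
  (exists x (Y : {set Z}), pair_cond T1 T2 x Y /\ k <= #|Y|) \/
  (exists (A : {set Z}) (S1 S2 : btree Z), #|Z| < (#|A| + 2) * k.-1 /\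
     restrict A T1 = Some S1 /\ restrict A T2 = Some S2 /\
     caterpillar S1 /\ caterpillar S2 /\ identical S1 S2).
Proof.
move=> Z2 zt1 zt2 Es.
case: (boolP [exists x, exists Y, pair_cond T1 T2 x Y && (k <= #|Y|)]).
  by case/existsP => x /existsP [Y /andP [HY kY]]; left; exists x, Y.
move=> no_large; right.
have small x Y : pair_cond T1 T2 x Y -> #|Y| < k.
  move=> HY; rewrite ltnNge; apply: contra no_large => kY.
  by apply/existsP; exists x; apply/existsP; exists Y; rewrite HY.
have k_gt1 : 1 < k.
  have [x [Y HY]] := pair_cond_exists Z2 zt1 zt2.
  by apply: leq_ltn_trans (small x Y HY); rewrite card_gt0; case/and4P: HY.
rewrite -(ZTree_size zt1); clear no_large.
case: T1 zt1 Es small => [y /ZTree_size sizeZ | L1 R1 zt1]; first by rewrite -sizeZ in Z2.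
case: T2 zt2 => [y /ZTree_size sizeZ | L2 R2 _]; first by rewrite -sizeZ in Z2.
by move=> Es small; apply: common_caterpillar_Node; rewrite ?(ZTree_uniq zt1).
Qed.

End Dichotomy.

Section RealBounds.
Local Open Scope R_scope.

Lemma log2_ge1 n : (2 <= n)%N -> 1 <= log2 (INR n).
Proof.
move=> n2; have ln2 : 0 < ln 2 by rewrite -ln_1; apply: ln_increasing; lra.
have n2' : 2 <= INR n by have := le_INR _ _ (leP n2); rewrite /=; lra.
have : ln 2 <= ln (INR n).
  case: (Rle_lt_or_eq_dec _ _ n2') => [H | <-]; last exact: Rle_refl.
  by apply: Rlt_le; apply: ln_increasing; lra.
rewrite /log2 => H; apply: (Rmult_le_reg_r (ln 2)) => //.
by rewrite /Rdiv Rmult_assoc Rinv_l; lra.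
Qed.

Lemma nat_ceil (t : R) : 0 <= t -> exists k : nat, t < INR k <= t + 1.
Proof.
move=> t0; have [up_gt up_le] := archimed t.
have up0 : (0 <= up t)%Z by apply: le_IZR; lra.
by exists (Z.to_nat (up t)); rewrite INR_IZR_INZ Znat.Z2Nat.id //; lra.
Qed.

Lemma comb_size_log_bound (N a k : nat) (C L : R) : C >= INR 4 -> 1 <= L ->
  INR k <= Rmin (INR N / C) (INR N / (2 * L)) + 1 ->
  (N < (a + 2) * k.-1)%N -> L <= INR a.
Proof.
move=> /= C4 L1; set t := Rmin _ _ => kt HN.
case: k kt HN => [|k'] kt HN; first by rewrite muln0 in HN.
rewrite S_INR /= in kt HN.
have HN' := lt_INR _ _ (ltP HN); rewrite mult_INR plus_INR /= in HN'.
have mul_le (D : R) : 0 < D -> t <= INR N / D -> t * D <= INR N.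
  move=> D0 tD; apply: (Rle_trans _ (INR N / D * D)); first by apply: Rmult_le_compat_r; lra.
  by right; field; lra.
have tC := mul_le C ltac:(lra) (Rmin_l _ _).
have tL := mul_le (2 * L) ltac:(lra) (Rmin_r _ _).
have := pos_INR a; have := pos_INR k'; have := pos_INR N; nra.
Qed.

Lemma threshold_choice (N : nat) (C L : R) : C >= INR 4 -> 1 <= L ->
  exists k : nat,
    (forall y : nat, (k <= y)%N -> INR y >= INR N / C \/ INR y >= INR N / (2 * L)) /\
    (forall a : nat, (N < (a + 2) * k.-1)%N -> L <= INR a).
Proof.
move=> C4 L1; set t := Rmin (INR N / C) (INR N / (2 * L)).
have t0 : 0 <= t.
  have N0 := pos_INR N; rewrite /= in C4.
  by apply: Rmin_glb; apply: Rle_mult_inv_pos; lra.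
have [k [tk kt]] := nat_ceil t0; exists k.
split=> [y ky | a]; last exact: comb_size_log_bound C4 L1 kt.
have : t < INR y by apply: Rlt_le_trans tk (le_INR _ _ (leP ky)).
rewrite /t; case: (Rle_lt_dec (INR N / C) (INR N / (2 * L))) => H.
- by rewrite Rmin_left // => Ht; left; lra.
- by rewrite Rmin_right => [Ht|]; [right | ]; lra.
Qed.

End RealBounds.

Theorem corollary1 (n : nat) (C : R) (Z : finType) (T1 T2 : btree Z) :
  (2 <= n)%N -> Rge C (INR 4) -> (2 <= #|Z|)%N ->
  ZTree T1 -> ZTree T2 -> leaves T1 = leaves T2 ->
  (exists (x : Z) (Y : {set Z}),
      pair_cond T1 T2 x Y /\ Rge (INR #|Y|) (Rdiv (INR #|Z|) C))
  \/ (exists (x : Z) (Y : {set Z}), good_pair n T1 T2 x Y)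
  \/ (exists (A : {set Z}) (S1 S2 : btree Z),
      Rge (INR #|A|) (log2 (INR n)) /\
      restrict A T1 = Some S1 /\ restrict A T2 = Some S2 /\
      caterpillar S1 /\ caterpillar S2 /\ identical S1 S2).
Proof.
move=> n2 C4 Z2 zt1 zt2 Es.
have [k [k_pair k_comb]] := threshold_choice #|Z| C4 (log2_ge1 n2).
case: (large_pair_or_common_caterpillar k Z2 zt1 zt2 Es) =>
  [[x [Y [HY kY]]] | [A [S1 [S2 [HA HS]]]]].
- by case: (k_pair _ kY) => H; [left | right; left]; exists x, Y.
- by right; right; exists A, S1, S2; split; [apply: Rle_ge; apply: k_comb HA | ].
Qed.
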